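(* Let $q$ be a prime, let $m \geq 1$ be an integer, and let $u$ be an integer with $0 \leq u \leq q-2$. Let $\mathcal{RM}_q(u,m) \subseteq \mathbb{F}_q^{q^m}$ be the code consisting of the vectors $\left(f(\alpha)\right)_{\alpha \in \mathbb{F}_q^m}$ (coordinates indexed by the $q^m$ points of $\mathbb{F}_q^m$ in a fixed order), where $f$ ranges over all polynomials in $\mathbb{F}_q[x_1,\ldots,x_m]$ of total degree at most $u$, and let $\mathcal{RM}^{\perp}_q(u,m)$ be its dual code with respect to the standard bilinear form $\langle \mathbf{x},\mathbf{y}\rangle=\sum_i x_i y_i$. Then for every codeword $\mathbf{c}$ of $\mathcal{RM}^{\perp}_q(u,m)$ of minimum nonzero Hamming weight, the $u+2$ points of $\mathbb{F}_q^m$ indexing the support of $\mathbf{c}$ lie on an affine line: that is, they can be written as $\mathbf{p}_1, \mathbf{p}_1 + t_1\mathbf{h}, \ldots, \mathbf{p}_1 + t_{u+1}\mathbf{h}$ for some $\mathbf{p}_1 \in \mathbb{F}_q^m$, some direction $\mathbf{h} \in \mathbb{F}_q^m \setminus \{\mathbf{0}\}$, and distinct nonzero elements $t_1,\ldots,t_{u+1} \in \mathbb{F}_q$.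
   Context: The support of a vector is the set of coordinates where it is nonzero; since coordinates are indexed by points of $\mathbb{F}_q^m$, the support is identified with a set of points of $\mathbb{F}_q^m$. For $u \leq q-2$ the minimum Hamming distance (minimum nonzero weight) of $\mathcal{RM}^{\perp}_q(u,m)$ equals $u+2$ (a known consequence of the Delsarte–Goethals–MacWilliams formula for the minimum distance of generalized Reed–Muller codes, using that $\mathcal{RM}^{\perp}_q(u,m)=\mathcal{RM}_q(m(q-1)-u-1,m)$). *)

From HB Require Import structures.
From mathcomp Require Import all_boot all_order all_algebra.
From mathcomp Require Import mpoly.
Set Implicit Arguments. Unset Strict Implicit. Unset Printing Implicit Defensive.
Import GRing.Theory.
Local Open Scope ring_scope.

Definition point (q m : nat) := 'rV['F_q]_m.
Definition word (q m : nat) := {ffun 'rV['F_q]_m -> 'F_q}.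

Definition RM (q u m : nat)  (c : word q m) : Prop :=
  exists f : {mpoly 'F_q[m]},
      (msize f <= u.+1)%N /\ forall a : 'rV['F_q]_m, c a = f.@[fun i => a ord0 i].

Definition RMdual (q u m : nat)  (c : word q m) : Prop :=
  forall d : word q m, @RM q u m d ->
      \sum_(a : 'rV['F_q]_m) c a * d a = 0.

Definition supp (q m : nat) (c : word q m) : {set 'rV['F_q]_m} :=
  [set a | c a != 0].

Definition hweight (q m : nat) (c : word q m) : nat := #|supp c|.

(* A nonzero dual word c cannot have a support of at most u+1 points: the
   product of the affine forms separating a0 from each other support point has
   degree <= u, and its evaluation vector pairs with c to c(a0) f(a0) != 0.
   Conversely the word taking the value P(s) at s (1,...,1) and 0 elsewhere,
   where P splits with q-2-u distinct roots, is dual because sum_s s^k = 0 in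
   F_q for k < q-1, and has weight u+2.  If two further points a, b of the
   support of a minimum-weight word were not collinear with a0, the affine form
   vanishing on the line through a0 and b, together with separating forms for
   the u-1 remaining points, would isolate a in the same way. *)

From HB Require Import structures.
From mathcomp Require Import all_boot all_order all_algebra.
From mathcomp Require Import mpoly.
From mathcomp Require Import zify.
Set Implicit Arguments. Unset Strict Implicit. Unset Printing Implicit Defensive.
Import GRing.Theory.
Local Open Scope ring_scope.

Section AffineForms.

Variables (R : idomainType) (n : nat).
Implicit Types (a b h x : 'rV[R]_n) (l : {mpoly R[n]}).

Definition coords x : 'I_n -> R := fun i => x ord0 i.

Lemma msize_prod_affine (L : seq {mpoly R[n]}) :
  all (fun l => msize l <= 2)%N L -> (msize (\prod_(l <- L) l) <= (size L).+1)%N.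
Proof.
elim: L => [|l L IH]; first by rewrite big_nil msize1.
rewrite big_cons => /andP[hl /IH hL].
have [->|l0] := eqVneq l 0; first by rewrite mul0r msize0.
have [->|L0] := eqVneq (\prod_(j <- L) j) 0; first by rewrite mulr0 msize0.
rewrite msizeM // [size _]/=; lia.
Qed.

Lemma msize_XsubC i (c : R) : (msize ('X_i - c%:MP : {mpoly R[n]}) <= 2)%N.
Proof.
apply: leq_trans (msizeD_le _ _) _; rewrite msizeN msizeX mdeg1 geq_max leqnn.
by rewrite msizeC; case: (c != 0).
Qed.

Definition sep_form a b : {mpoly R[n]} :=
  if [pick i | a ord0 i != b ord0 i] is Some i then 'X_i - (b ord0 i)%:MP else 1.

Lemma msize_sep_form a b : (msize (sep_form a b) <= 2)%N.
Proof. by rewrite /sep_form; case: pickP => [i _|_]; rewrite ?msize_XsubC ?msize1. Qed.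

Lemma sep_form_eval a b : a != b ->
  (sep_form a b).@[coords a] != 0 /\ (sep_form a b).@[coords b] = 0.
Proof.
move=> ab; rewrite /sep_form; case: pickP => [i abi | same].
  by rewrite !(mevalB, mevalXU, mevalC) subrr subr_eq0.
by case/eqP: ab; apply/rowP => i; apply/eqP/negbFE; exact: same.
Qed.

Definition minor_form a h (i j : 'I_n) : {mpoly R[n]} :=
  h ord0 j *: ('X_i - (a ord0 i)%:MP) - h ord0 i *: ('X_j - (a ord0 j)%:MP).

Lemma msize_minor_form a h i j : (msize (minor_form a h i j) <= 2)%N.
Proof.
apply: leq_trans (msizeD_le _ _) _; rewrite msizeN geq_max.
by rewrite !(leq_trans (msizeZ_le _ _)) ?msize_XsubC.
Qed.

Lemma minor_form_eval a h i j x :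
  (minor_form a h i j).@[coords x] =
  h ord0 j * (x - a) ord0 i - h ord0 i * (x - a) ord0 j.
Proof. by rewrite !(mevalB, mevalZ, mevalXU, mevalC) !mxE. Qed.

End AffineForms.

Lemma row_proportional (F : fieldType) n (v h : 'rV[F]_n) (k : 'I_n) :
  h ord0 k != 0 -> (forall i j, v ord0 i * h ord0 j = v ord0 j * h ord0 i) ->
  v = (v ord0 k / h ord0 k) *: h.
Proof.
by move=> hk minors; apply/rowP => i; rewrite mxE mulrAC -(minors i k) mulfK.
Qed.

Section PowerSums.

Variable q : nat.
Hypothesis q_pr : prime q.

Lemma exists_expr_neq1 k : (k.+1 < q.-1)%N ->
  exists2 a : 'F_q, a != 0 & a ^+ k.+1 != 1.
Proof.
move=> hk; case: (boolP [exists a : 'F_q, (a != 0) && (a ^+ k.+1 != 1)]).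
  by case/existsP => a /andP[]; exists a.
rewrite negb_exists => /forallP all1; exfalso.
have nonzero_roots : all (root ('X^(k.+1) - 1 : {poly 'F_q})) (enum (predC1 (0 : 'F_q))).
  apply/allP => a; rewrite mem_enum /= => a0.
  have := all1 a; rewrite (a0 : a != 0) /= negbK => /eqP ak.
  by rewrite /root !hornerE ak subrr.
have := max_poly_roots _ nonzero_roots (enum_uniq _).
rewrite -size_poly_eq0 size_XnsubC // => /(_ isT).
by rewrite -cardE cardC1 card_Fp //; lia.
Qed.

Lemma sum_Fp_expr k : (k < q.-1)%N -> \sum_(s : 'F_q) s ^+ k = 0.
Proof.
case: k => [|k] hk.
  under eq_bigr do rewrite expr0.
  by rewrite sumr_const card_Fp // pchar_Fp_0.
have [a a0 ak] := exists_expr_neq1 hk.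
have scaled : \sum_(s : 'F_q) s ^+ k.+1 = a ^+ k.+1 * \sum_(s : 'F_q) s ^+ k.+1.
  rewrite mulr_sumr (reindex_inj (mulfI a0)) /=.
  by apply: eq_bigr => s _; rewrite exprMn.
apply/eqP; move/eqP: scaled.
rewrite -subr_eq0 -{1}[\sum_s _]mul1r -mulrBl mulf_eq0 subr_eq0 eq_sym.
by rewrite (negbTE ak).
Qed.

Lemma sum_Fp_horner (g : {poly 'F_q}) :
  (size g <= q.-1)%N -> \sum_(s : 'F_q) g.[s] = 0.
Proof.
move=> hg; under eq_bigr do rewrite horner_coef.
rewrite exchange_big big1 //= => i _.
by rewrite -mulr_sumr sum_Fp_expr ?mulr0 // (leq_trans (ltn_ord i)).
Qed.

Lemma meval_diag m (f : {mpoly 'F_q[m]}) (s : 'F_q) :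
  f.@[fun _ => s] = \sum_(mm <- msupp f) f@_mm * s ^+ mdeg mm.
Proof. by rewrite mevalE; apply: eq_bigr => mm _; rewrite prodrXr mdegE. Qed.

Lemma sum_Fp_horner_meval_diag m u (P : {poly 'F_q}) (f : {mpoly 'F_q[m]}) :
  (size P + u <= q.-1)%N -> (msize f <= u.+1)%N ->
  \sum_(s : 'F_q) P.[s] * f.@[fun _ => s] = 0.
Proof.
move=> hP hf; under eq_bigr do rewrite meval_diag mulr_sumr.
rewrite exchange_big big_seq big1 //= => mm mm_supp.
under eq_bigr do rewrite mulrCA -hornerXn -hornerM.
rewrite -mulr_sumr sum_Fp_horner ?mulr0 //.
apply: leq_trans (size_polyMleq _ _) _; rewrite size_polyXn.
by have := msize_mdeg_lt mm_supp; lia.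
Qed.

End PowerSums.

Section DiagonalWord.

Variables q m u : nat.
Hypothesis q_pr : prime q.
Hypothesis m_gt0 : (0 < m)%N.

Let e : 'rV['F_q]_m := const_mx 1.

Lemma scale_diag_inj : injective (fun s : 'F_q => s *: e).
Proof.
move=> s s' /rowP/(_ (Ordinal m_gt0)).
by rewrite !mxE !mulr1.
Qed.

Definition diag_word (P : {poly 'F_q}) : word q m :=
  [ffun x => \sum_(s | x == s *: e) P.[s]].

Lemma diag_wordE (P : {poly 'F_q}) s : diag_word P (s *: e) = P.[s].
Proof.
rewrite ffunE (big_pred1 s) // => s'.
by rewrite eq_sym (inj_eq scale_diag_inj).
Qed.

Lemma supp_diag_word (P : {poly 'F_q}) :
  supp (diag_word P) = [set s *: e | s in [pred s | ~~ root P s]].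
Proof.
apply/setP => x; rewrite inE; apply/idP/imsetP => [|[s Ps ->]].
  case: (pickP [pred s | x == s *: e]) => [s /eqP-> | off_diag].
    by rewrite diag_wordE => Ps; exists s.
  by rewrite ffunE big_pred0 ?eqxx.
by rewrite diag_wordE.
Qed.

Lemma diag_word_dual (P : {poly 'F_q}) :
  (size P + u <= q.-1)%N -> @RMdual q u m (diag_word P).
Proof.
move=> hP d [f [hf d_f]].
under eq_bigr do rewrite d_f.
have -> : \sum_a diag_word P a * f.@[coords a] =
          \sum_(s : 'F_q) P.[s] * f.@[fun _ => s].
  under eq_bigr do rewrite ffunE mulr_suml big_mkcond /=.
  rewrite exchange_big; apply: eq_bigr => s _.
  rewrite -big_mkcond /= (big_pred1 (s *: e)) => [|x] //.
  by congr (_ * _); apply: meval_eq => i; rewrite /coords !mxE mulr1.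
exact: sum_Fp_horner_meval_diag hP hf.
Qed.

Lemma exists_RMdual_weight : (u <= q - 2)%N ->
  exists2 c : word q m, @RMdual q u m c & c != 0 /\ hweight c = u.+2.
Proof.
move=> hu; have q_gt1 := prime_gt1 q_pr.
set rs := take (q - 2 - u) (enum 'F_q).
set P := \prod_(z <- rs) ('X - z%:P).
have size_rs : size rs = (q - 2 - u)%N.
  by rewrite size_takel // -cardE card_Fp //; lia.
have weight : hweight (diag_word P) = u.+2.
  rewrite /hweight supp_diag_word card_in_imset; last first.
    by move=> ? ? _ _; apply: scale_diag_inj.
  have roots : [predC [pred s | ~~ root P s]] =i rs.
    by move=> s; rewrite !inE negbK root_prod_XsubC.
  have := cardC [pred s | ~~ root P s]; rewrite card_Fp // (eq_card roots).
  rewrite (card_uniqP (take_uniq _ (enum_uniq _))) size_rs.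
  by move=> h; apply/eqP; rewrite -(eqn_add2r (q - 2 - u)) h; apply/eqP; lia.
exists (diag_word P); last split => //.
  by apply: diag_word_dual; rewrite size_prod_XsubC size_rs; lia.
apply/eqP => c0; move: weight; rewrite /hweight c0.
have -> : supp (0 : word q m) = set0 by apply/setP => x; rewrite !inE ffunE eqxx.
by rewrite cards0.
Qed.

End DiagonalWord.

Section DualCode.

Variables q m u : nat.
Implicit Types (c : word q m) (a b x : 'rV['F_q]_m).

Lemma supp_neq0 c : c != 0 -> supp c != set0.
Proof.
apply: contraNneq => supp0; apply/eqP/ffunP => a; rewrite ffunE.
by have := in_set0 a; rewrite -supp0 inE => /negbFE/eqP.
Qed.

Lemma RMdual_support_nonzero c a0 (f : {mpoly 'F_q[m]}) :
  @RMdual q u m c -> a0 \in supp c -> (msize f <= u.+1)%N -> f.@[coords a0] != 0 ->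
  exists2 b, b \in supp c :\ a0 & f.@[coords b] != 0.
Proof.
move=> dual ca0 hf fa0.
case: (boolP [exists b in supp c :\ a0, f.@[coords b] != 0]) => [/exists_inP//|].
rewrite negb_exists_in => /forall_inP vanish.
have /dual : @RM q u m [ffun a => f.@[coords a]] by exists f; split => // a; rewrite ffunE.
rewrite (bigD1 a0) //= big1 ?addr0 => [|b b_a0].
  rewrite ffunE => /eqP; rewrite mulf_eq0 (negbTE fa0) orbF.
  by move: ca0; rewrite inE => /negbTE ->.
rewrite ffunE; case: (boolP (b \in supp c)) => cb.
  have b_B : b \in supp c :\ a0 by rewrite in_setD1 b_a0 cb.
  by have /negbNE/eqP -> := vanish b b_B; rewrite mulr0.
by move: cb; rewrite inE negbK => /eqP ->; rewrite mul0r.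
Qed.

Lemma RMdual_separate c a0 (L : seq {mpoly 'F_q[m]}) (B : {set 'rV['F_q]_m}) :
  @RMdual q u m c -> a0 \in supp c -> a0 \notin B -> (size L + #|B| <= u)%N ->
  all (fun l => msize l <= 2)%N L -> all (fun l => l.@[coords a0] != 0) L ->
  exists2 b, b \in supp c :\ a0 & (b \notin B) && all (fun l => l.@[coords b] != 0) L.
Proof.
move=> dual ca0 a0B hsize affL La0.
set L' := L ++ [seq sep_form a0 b | b <- enum B].
have eval_prod x :
    ((\prod_(l <- L') l).@[coords x] != 0) = all (fun l => l.@[coords x] != 0) L'.
  by rewrite rmorph_prod prodf_seq_neq0.
have sep_a0 b : b \in B ->
    (sep_form a0 b).@[coords a0] != 0 /\ (sep_form a0 b).@[coords b] = 0.
  by move=> bB; apply: sep_form_eval; apply: contraNneq a0B => ->.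
have size_prod : (msize (\prod_(l <- L') l) <= u.+1)%N.
  apply: leq_trans (msize_prod_affine _) _.
    by rewrite all_cat affL; apply/allP => l /mapP[b _ ->]; apply: msize_sep_form.
  by rewrite size_cat size_map -cardE ltnS.
have prod_a0 : (\prod_(l <- L') l).@[coords a0] != 0.
  rewrite eval_prod all_cat La0; apply/allP => l /mapP[b].
  by rewrite mem_enum => /sep_a0[? _] ->.
have [b b_supp] := RMdual_support_nonzero dual ca0 size_prod prod_a0.
rewrite eval_prod all_cat => /andP[Lb sepb]; exists b; rewrite // Lb andbT.
apply/negP => bB; have := allP sepb (sep_form a0 b).
by rewrite map_f ?mem_enum // (sep_a0 _ bB).2 eqxx => /(_ isT).
Qed.

Lemma RMdual_weight_gt c : @RMdual q u m c -> c != 0 -> (u.+2 <= hweight c)%N.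
Proof.
move=> dual c0; have [a0 ca0] := set0Pn _ (supp_neq0 c0).
rewrite leqNgt; apply/negP => light.
have few : (#|supp c :\ a0| <= u)%N.
  by move: light; rewrite /hweight (cardsD1 a0) ca0 add1n !ltnS.
have [b b_supp /andP[/negP[]]] :=
  @RMdual_separate c a0 [::] (supp c :\ a0) dual ca0 (negbT (setD11 _ _)) few isT isT.
exact: b_supp.
Qed.

Lemma RMdual_minors c a0 b a :
  @RMdual q u m c -> (hweight c <= u.+2)%N ->
  a0 \in supp c -> b \in supp c -> a \in supp c ->
  forall i j, (a - a0) ord0 i * (b - a0) ord0 j = (a - a0) ord0 j * (b - a0) ord0 i.
Proof.
move=> dual heavy ca0 cb ca i j.
apply/eqP; rewrite -[_ == _]negbK; apply/negP => minor_a.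
set h := b - a0; set lam := minor_form a0 h i j.
have lam_a : lam.@[coords a] != 0.
  by rewrite minor_form_eval subr_eq0 mulrC [h ord0 i * _]mulrC.
have lam_a0 : lam.@[coords a0] = 0 by rewrite minor_form_eval subrr !mxE !mulr0 subrr.
have lam_b : lam.@[coords b] = 0 by rewrite minor_form_eval -/h mulrC subrr.
have a_a0 : a != a0 by apply: contraNneq lam_a => ->; rewrite lam_a0.
have a_b : a != b by apply: contraNneq lam_a => ->; rewrite lam_b.
have b_a0 : b != a0 by apply: contraNneq minor_a => ->; rewrite subrr !mxE !mulr0.
set B := supp c :\ a :\ a0 :\ b.
have aB : a \notin B by rewrite !in_setD1 eqxx !andbF.
have few : (size [:: lam] + #|B| <= u)%N.
  move: heavy; rewrite /hweight (cardsD1 a) ca (cardsD1 a0 (supp c :\ a)).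
  rewrite (cardsD1 b (supp c :\ a :\ a0)) !in_setD1 eq_sym a_a0 ca0 b_a0 eq_sym a_b cb.
  by rewrite /= !add1n !ltnS.
have lam_affine : all (fun l => msize l <= 2)%N [:: lam].
  by rewrite /= msize_minor_form.
have lam_a_all : all (fun l => l.@[coords a] != 0) [:: lam] by rewrite /= lam_a.
have [x x_supp /andP[xB /andP[lam_x _]]] :=
  RMdual_separate dual ca aB few lam_affine lam_a_all.
have : (x == a0) || (x == b).
  apply: contraNT xB; rewrite negb_or !in_setD1 => /andP[-> ->].
  by rewrite -in_setD1 x_supp.
by case/orP => /eqP x_eq; move: lam_x; rewrite x_eq ?lam_a0 ?lam_b eqxx.
Qed.

Lemma RMdual_supp_on_line c a0 b :
  @RMdual q u m c -> (hweight c <= u.+2)%N ->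
  a0 \in supp c -> b \in supp c -> b != a0 ->
  exists tau : 'rV['F_q]_m -> 'F_q, forall x, x \in supp c -> x = a0 + tau x *: (b - a0).
Proof.
move=> dual heavy ca0 cb b_a0.
have [k hk] : exists k, (b - a0) ord0 k != 0.
  apply/existsP; apply: contraNT b_a0 => /existsPn zero.
  by rewrite -subr_eq0; apply/eqP/rowP => k; rewrite [RHS]mxE; apply/eqP/negbNE/zero.
exists (fun x => (x - a0) ord0 k / (b - a0) ord0 k) => x cx.
by rewrite -(row_proportional hk (RMdual_minors dual heavy ca0 cb cx)) addrC subrK.
Qed.

End DualCode.

Lemma set_on_line_param (F : finFieldType) m n (T : {set 'rV[F]_m}) (a0 h : 'rV[F]_m)
    (tau : 'rV[F]_m -> F) :
  a0 \notin T -> #|T| = n -> (forall x, x \in T -> x = a0 + tau x *: h) ->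
  exists t : 'I_n -> F,
    [/\ injective t, forall i, t i != 0 & T = [set a0 + t i *: h | i : 'I_n]].
Proof.
move=> a0T cardT on_line.
have size_enum : size (enum T) = n by rewrite -cardE.
pose g i := nth a0 (enum T) (i : 'I_n).
have gT i : g i \in T by rewrite -mem_enum mem_nth ?size_enum.
have gE i : a0 + tau (g i) *: h = g i by rewrite -on_line.
have g_inj : injective g.
  by move=> i j /eqP; rewrite nth_uniq ?size_enum ?enum_uniq // => /eqP/val_inj.
exists (tau \o g); split.
- by move=> i j /= tij; apply: g_inj; rewrite -gE tij gE.
- move=> i; apply: contraNneq a0T => /= ti0.
  by have := gT i; rewrite -gE /= ti0 scale0r addr0.
- apply/eqP; rewrite eq_sym eqEcard card_in_imset => [|i j _ _ /=]; last first.
    by rewrite !gE => /g_inj.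
  rewrite card_ord cardT leqnn andbT; apply/subsetP => x /imsetP[i _ ->].
  by rewrite /= gE.
Qed.

Theorem lemma1 (q m u : nat) (hq : prime q) (hm : (1 <= m)%N) (hu : (u <= q - 2)%N)
  (c : word q m) :
  @RMdual q u m c -> c != 0 ->
  (forall c' : word q m, @RMdual q u m c' -> c' != 0 -> (hweight c <= hweight c')%N) ->
  exists (p1 h : 'rV['F_q]_m) (t : 'I_u.+1 -> 'F_q),
    [/\ h != 0, injective t, (forall i, t i != 0) &
        supp c = p1 |: [set p1 + t i *: h | i : 'I_u.+1]].
Proof.
move=> dual c0 minimal.
have [c' dual' [c'0 weight']] := exists_RMdual_weight hq hm hu.
have heavy : (hweight c <= u.+2)%N by rewrite -weight'; apply: minimal.
have weight : #|supp c| = u.+2.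
  by apply/eqP; rewrite eqn_leq heavy (RMdual_weight_gt dual c0).
have [a0 ca0] := set0Pn _ (supp_neq0 c0).
have cardT : #|supp c :\ a0| = u.+1 by move: weight; rewrite (cardsD1 a0) ca0 add1n => -[].
have [b] : exists b, b \in supp c :\ a0 by apply/set0Pn; rewrite -card_gt0 cardT.
rewrite in_setD1 => /andP[b_a0 cb].
have [tau on_line] := RMdual_supp_on_line dual heavy ca0 cb b_a0.
have T_on_line x : x \in supp c :\ a0 -> x = a0 + tau x *: (b - a0).
  by case/setD1P => _; apply: on_line.
have [t [t_inj t_neq0 T_line]] :=
  set_on_line_param (negbT (setD11 _ _)) cardT T_on_line.
exists a0, (b - a0), t; split => //; first by rewrite subr_eq0.
by rewrite -T_line setD1K.
Qed.
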